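(* Let $A$ be a real sequence over $\mathbb{Z}^2$ with $|A|=3.99$, maximal multiplicity $\le\frac12$, and such that no line in $\mathbb{R}^2$ contains more than $\frac32$ points of $A$. Suppose there exists a line $\ell$ containing $\frac32$ points of $A$. Then $\Sigma^1_{\mathbb{R}}(A)$ contains a lattice point of $\mathbb{Z}^2$ in its interior.
   Context: A real sequence $A$ over $\mathbb{Z}^2$ is a family of pairs $(a_i,\mu_i)$ of distinct points $a_i\in\mathbb{Z}^2$ and non-negative reals $\mu_i$ (multiplicities); $|A|=\sum_i\mu_i$. A set $X$ contains $\sum_{i:a_i\in X}\mu_i$ points of $A$. $\Sigma^1_{\mathbb{R}}(A)=\{\sum_i t_ia_i : t_i\in[0,\mu_i],\ \sum_i t_i=1\}$. *)

From HB Require Import structures.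
From mathcomp Require Import all_boot all_order all_algebra.
From mathcomp Require Import all_classical all_reals all_analysis.
Set Implicit Arguments. Unset Strict Implicit. Unset Printing Implicit Defensive.
Import Order.TTheory GRing.Theory Num.Theory.
Local Open Scope ring_scope.
Local Open Scope classical_set_scope.

(* A real sequence over Z^2: n pairwise distinct points a i in Z^2 with
   nonnegative real multiplicities mu i. *)
Definition real_seq (R : realType) (n : nat) (a : 'I_n -> int * int)
  (mu : 'I_n -> R) : Prop :=
  injective a /\ forall i, 0 <= mu i.

Definition toR2 (R : realType) (p : int * int) : R * R :=
  ((p.1)%:~R, (p.2)%:~R).

Definition total_mult (R : realType) (n : nat) (mu : 'I_n -> R) : R :=
  \sum_(i < n) mu i.

(* the line {x | c1 x1 + c2 x2 = c0} in R^2, (c1,c2) <> (0,0) *)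
Definition on_line (R : realType) (c1 c2 c0 : R) (x : R * R) : bool :=
  c1 * x.1 + c2 * x.2 == c0.

Definition points_in (R : realType) (n : nat) (a : 'I_n -> int * int)
  (mu : 'I_n -> R) (X : pred (R * R)) : R :=
  \sum_(i < n | X (toR2 R (a i))) mu i.

Definition Sigma1R (R : realType) (n : nat) (a : 'I_n -> int * int)
  (mu : 'I_n -> R) : set (R * R) :=
  [set x | exists t : 'I_n -> R,
     (forall i, 0 <= t i <= mu i) /\ \sum_(i < n) t i = 1 /\
     x = (\sum_(i < n) t i * ((a i).1)%:~R, \sum_(i < n) t i * ((a i).2)%:~R)].

From HB Require Import structures.
From mathcomp Require Import all_boot all_order all_algebra.
From mathcomp Require Import all_classical all_reals all_analysis.
From mathcomp Require Import ring lra zify.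
Set Implicit Arguments. Unset Strict Implicit. Unset Printing Implicit Defensive.
Import Order.TTheory GRing.Theory Num.Theory.
Local Open Scope ring_scope.
Import numFieldNormedType.Exports.
Local Open Scope classical_set_scope.

Lemma sum_dirac (R : pzRingType) (n : nat) (j : 'I_n) (F : 'I_n -> R) :
  \sum_(l < n) (l == j)%:R * F l = F j.
Proof.
by rewrite (bigD1 j) //= eqxx mul1r big1 ?addr0 // => l /negbTE ->; rewrite mul0r.
Qed.


Lemma sum_indicator (R : pzSemiRingType) (n : nat) (F : 'I_n -> R) (P : pred 'I_n) :
  \sum_(i < n) F i * (P i)%:R = \sum_(i < n | P i) F i.
Proof. by rewrite [RHS]big_mkcond; apply: eq_bigr => i _; case: (P i); rewrite ?mulr1 ?mulr0. Qed.


Lemma exists_neq_of_sum_neq (R : nmodType) (n : nat) (F G : 'I_n -> R) :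
  \sum_(i < n) F i != \sum_(i < n) G i -> exists i, F i != G i.
Proof.
move=> sum_neq; apply/existsP; apply: contraNT sum_neq => /existsPn FG.
by apply/eqP/eq_bigr => i _; apply/eqP; rewrite -[_ == _]negbK FG.
Qed.

Lemma exists_other_neq (R : zmodType) (n : nat) (F G : 'I_n -> R) (i1 : 'I_n) :
  \sum_(i < n) F i = \sum_(i < n) G i -> F i1 != G i1 -> exists2 i2, i2 != i1 & F i2 != G i2.
Proof.
move=> sum_eq F_neq.
have : \sum_(i | i != i1) F i != \sum_(i | i != i1) G i.
  apply: contra F_neq => /eqP others_eq.
  by move/eqP: sum_eq; rewrite (bigD1 i1) // [X in _ == X](bigD1 i1) //= others_eq (inj_eq (addIr _)).
rewrite !(big_mkcond (fun i => i != i1)) => /exists_neq_of_sum_neq [i2].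
have [->|ne] := eqVneq i2 i1; first by rewrite eqxx.
by move=> FG; exists i2.
Qed.


Lemma exists_pos_of_sum_gt0 (R : realDomainType) (n : nat) (mu : 'I_n -> R) (P : pred 'I_n) :
  0 < \sum_(i | P i) mu i -> exists i, P i /\ 0 < mu i.
Proof.
move=> sum_gt0; have /existsP[i /andP[Pi mui]] : [exists i, P i && (0 < mu i)].
  apply: contraTT sum_gt0 => /existsPn none; rewrite -leNgt.
  by apply: sumr_le0 => i Pi; have := none i; rewrite Pi /= -leNgt.
by exists i.
Qed.

Lemma exists_two_pos (R : realDomainType) (n : nat) (mu : 'I_n -> R) (P : pred 'I_n) (m : R) :
  0 <= m -> (forall i, mu i <= m) -> m < \sum_(i | P i) mu i ->
  exists p q, [/\ q != p, P p, P q, 0 < mu p & 0 < mu q].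
Proof.
move=> m_ge0 mu_le P_mass.
have [p [Pp mup]] := exists_pos_of_sum_gt0 (le_lt_trans m_ge0 P_mass).
have [|q [/andP[Pq qp] muq]] := @exists_pos_of_sum_gt0 _ _ mu (fun i => P i && (i != p)).
  by move: P_mass; rewrite (bigD1 p) //= -subr_gt0 => /lt_le_trans; apply; rewrite lerBlDl lerD2r.
by exists p, q.
Qed.


Lemma nat_threshold (P : pred nat) (N : nat) : P 0 -> ~~ P N -> exists m, P m && ~~ P m.+1.
Proof.
elim: N => [-> //|N IH] P0 PN.
by case PN' : (P N); [exists N; rewrite PN' | apply: IH; rewrite ?PN'].
Qed.


Lemma exists_int_between (R : realType) (x y : R) :
  x + 1 <= y -> (forall z : int, x != z%:~R) -> exists z : int, x < z%:~R < y.
Proof.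
move=> xy x_notint; exists (Num.floor x + 1); rewrite floorD1_gt /= intrD.
have : (Num.floor x)%:~R < x by rewrite lt_neqAle floor_le andbT eq_sym.
lra.
Qed.


Lemma intr_norm_gt0_ge1 (R : realDomainType) (z : int) :
  (0 < `|z%:~R : R|) = (1 <= `|z%:~R : R|).
Proof. by rewrite -intr_norm ltr0z ler1z gtz0_ge1. Qed.


Lemma strict_convex_between (R : realFieldType) (x y w l : R) :
  0 <= x <= w -> 0 <= y <= w -> x != y -> 0 < l < 1 -> 0 < l * x + (1 - l) * y < w.
Proof.
move=> /andP[x0 xw] /andP[y0 yw] xy /andP[l0 l1].
have [lt_xy|lt_yx] : x < y \/ y < x by move: xy; rewrite neq_lt => /orP.
  have := mulr_gt0 l0 (_ : 0 < y - x); rewrite subr_gt0 => /(_ lt_xy) ?.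
  by apply/andP; split; nra.
have := mulr_gt0 (_ : 0 < 1 - l) (_ : 0 < x - y); rewrite !subr_gt0 => /(_ l1 lt_yx) ?.
by apply/andP; split; nra.
Qed.


Lemma frac_of_le (R : realFieldType) (s A : R) : 0 <= s <= A -> 0 <= s / A <= 1 /\ s / A * A = s.
Proof.
case/andP=> s_ge0 sA; have [A0|A_neq0] := eqVneq A 0.
  by rewrite A0 invr0 mulr0 mul0r lexx ler01; split=> //; apply/eqP; rewrite eq_le s_ge0 -A0 sA.
have A_gt0 : 0 < A by rewrite lt_neqAle eq_sym A_neq0 (le_trans s_ge0).
by rewrite divfK // divr_ge0 ?ler_pdivrMr ?mul1r ?(ltW A_gt0).
Qed.


Lemma min_sub_min_ge0_le (R : realDomainType) (al x y : R) : x <= y ->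
  0 <= Num.min al y - Num.min al x <= y - x.
Proof. by move=> xy; case: (lerP al x) => ?; case: (lerP al y) => ?; apply/andP; split; lra. Qed.

Lemma min_split_ge (R : realFieldType) (al c m : R) : 1/2 <= al -> al <= 1 ->
  m <= c -> m <= 3/2 - c -> m <= 1/2 -> m + al <= Num.min al c + Num.min al (3/2 - c).
Proof. by move=> *; case: (lerP al c) => ?; case: (lerP al (3/2 - c)) => ?; lra. Qed.


Lemma one_sided_coefficients (R : realFieldType) (S2 H m1 : R) :
  1 < S2 -> 0 <= H -> 2 * H <= S2 -> 0 <= m1 ->
  exists ka la : R, [/\ 0 <= ka < 1, 0 < la < 1, la * S2 + ka * m1 = 1,
                      0 <= la * H + ka * m1 <= 1/2 & 2 * H < S2 -> 0 < ka].
Proof.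
move=> S2_gt1 H_ge0 HS2 m1_ge0.
have [S2_gt0 m1_gt0] : 0 < S2 /\ 0 < m1 + 1 by split; lra.
pose q := (S2 - 2 * H) / (4 * S2).
have q_ge0 : 0 <= q by apply: divr_ge0; lra.
have q_le : q <= 1/4 by rewrite ler_pdivrMr; lra.
pose ka := q / (m1 + 1).
have ka_ge0 : 0 <= ka by rewrite divr_ge0 // ltW.
have ka_le : ka <= q by rewrite ler_pdivrMr // ler_peMr //; lra.
have x_le : ka * m1 <= q.
  by rewrite /ka mulrAC ler_pdivrMr // ler_wpM2l //; lra.
pose la := (1 - ka * m1) / S2.
have laS2 : la * S2 = 1 - ka * m1 by rewrite divfK // gt_eqF.
have x_ge0 : 0 <= ka * m1 by rewrite mulr_ge0.
exists ka, la; split.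
- by apply/andP; split; lra.
- by rewrite divr_gt0 ?ltr_pdivrMr ?mul1r //=; lra.
- by rewrite laS2 subrK.
- have laH : la * H * S2 = (1 - ka * m1) * H by rewrite mulrAC laS2.
  have q4 : q * (4 * S2) = S2 - 2 * H by rewrite divfK // mulf_neq0 // gt_eqF.
  apply/andP; split; first by rewrite addr_ge0 // mulr_ge0 // divr_ge0; lra.
  rewrite -(ler_pM2r S2_gt0) mulrDl laH; nra.
- by move=> lt_HS2; rewrite divr_gt0 // divr_gt0 ?subr_gt0 ?mulr_gt0.
Qed.

Lemma solve2_small (R : realFieldType) (P1 P2 Q1 Q2 d1 d2 e : R) :
  1 <= `|P1 * Q2 - P2 * Q1| -> `|d1| <= e -> `|d2| <= e ->
  exists u v, [/\ u * P1 + v * Q1 = d1, u * P2 + v * Q2 = d2,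
                  `|u| <= e * (`|Q1| + `|Q2|) & `|v| <= e * (`|P1| + `|P2|)].
Proof.
set D := P1 * Q2 - P2 * Q1 => D_ge1 d1e d2e.
have D_neq0 : D != 0 by rewrite -normr_gt0 (lt_le_trans ltr01).
have e_ge0 : 0 <= e := le_trans (normr_ge0 _) d1e.
have small x y p q : `|x| <= e -> `|y| <= e -> `|x * p - y * q| / `|D| <= e * (`|q| + `|p|).
  move=> xe ye; rewrite ler_pdivrMr ?(lt_le_trans ltr01) //.
  have x_p : `|x| * `|p| <= e * `|p| by rewrite ler_wpM2r.
  have y_q : `|y| * `|q| <= e * `|q| by rewrite ler_wpM2r.
  apply: (le_trans (ler_normB _ _)); rewrite !normrM.
  apply: (@le_trans _ _ (e * (`|q| + `|p|))); first by rewrite mulrDr addrC lerD.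
  by rewrite ler_peMr ?mulr_ge0 ?addr_ge0.
exists ((d1 * Q2 - d2 * Q1) / D), ((P1 * d2 - P2 * d1) / D); split.
- by rewrite /D; field.
- by rewrite /D; field.
- by rewrite normrM normfV small.
- by rewrite normrM normfV [P1 * d2]mulrC [P2 * d1]mulrC [`|P1| + _]addrC small.
Qed.


Lemma exists_small_step (R : realType) (n : nat) (mu eta v : 'I_n -> R) (N : R) :
  (forall i, v i != 0 -> 0 < eta i < mu i) ->
  exists2 e : R, 0 < e & (forall i, v i != 0 -> 0 < eta i + e * v i < mu i) /\ e * `|N| < 1.
Proof.
move=> free_v.
have [sl sl_gt0 sl_le] : exists2 sl : 'I_n -> R,
    (forall i, v i != 0 -> 0 < sl i) & forall i, sl i <= eta i /\ sl i <= mu i - eta i.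
  exists (fun i => Num.min (eta i) (mu i - eta i)); last by move=> i; rewrite !ge_min !lexx ?orbT.
  by move=> i /free_v /andP[? ?]; rewrite lt_min subr_gt0; apply/andP.
have [S S_ge0 v_le] : exists2 S : R, 0 <= S & forall i, v i != 0 -> `|v i| <= S * sl i.
  exists (\sum_(i | v i != 0) `|v i| / sl i).
    by apply: sumr_ge0 => i /sl_gt0 sl_i; exact: divr_ge0 (normr_ge0 _) (ltW sl_i).
  move=> i vi; rewrite -ler_pdivrMr ?sl_gt0 // (bigD1 i) //= lerDl.
  by apply: sumr_ge0 => l /andP[/sl_gt0 sl_l _]; exact: divr_ge0 (normr_ge0 _) (ltW sl_l).
have [e e_gt0 [eS eN]] : exists2 e : R, 0 < e & e * S <= 1/2 /\ e * `|N| < 1.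
  have D_gt0 : 0 < 2 * (1 + S + `|N|) by have := normr_ge0 N; lra.
  exists (2 * (1 + S + `|N|))^-1; first by rewrite invr_gt0.
  by rewrite !(mulrC _^-1) ler_pdivrMr // ltr_pdivrMr //; have := normr_ge0 N; split; lra.
exists e => //; split=> // i vi.
have small : `|e * v i| <= sl i / 2.
  rewrite normrM gtr0_norm //; apply: le_trans (ler_wpM2l (ltW e_gt0) (v_le i vi)) _.
  by rewrite mulrA [sl i / 2]mulrC ler_wpM2r ?(ltW (sl_gt0 i vi)) // -div1r.
move: small; rewrite ler_norml => /andP[lo hi].
have [sl_i [? ?]] := (sl_gt0 i vi, sl_le i).
by apply/andP; split; lra.
Qed.


Lemma interior_box (R : realType) (S : set (R * R)) (z : R * R) (e : R) :
  0 < e -> (forall w, `|w.1 - z.1| < e -> `|w.2 - z.2| < e -> S w) ->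
  interior S z.
Proof.
move=> e_gt0 Sbox; apply/nbhs_ballP; exists e => // w [/= w1 w2].
by apply: Sbox; rewrite distrC.
Qed.


Definition cross (p q r : int * int) : int :=
  (q.1 - p.1) * (r.2 - p.2) - (q.2 - p.2) * (r.1 - p.1).

Definition bary (R : realType) (n : nat) (a : 'I_n -> int * int) (t : 'I_n -> R) : R * R :=
  (\sum_(l < n) t l * ((a l).1)%:~R, \sum_(l < n) t l * ((a l).2)%:~R).

Definition free_repr (R : realType) (n : nat) (a : 'I_n -> int * int)
    (mu t : 'I_n -> R) (z : int * int) : Prop :=
  [/\ forall l, 0 <= t l <= mu l, \sum_(l < n) t l = 1, bary a t = toR2 R z &
      exists i j k, [/\ 0 < t i < mu i, 0 < t j < mu j, 0 < t k < mu k &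
                        cross (a i) (a j) (a k) != 0]].


Section FreeRepresentation.
Variables (R : realType) (n : nat) (a : 'I_n -> int * int) (mu : 'I_n -> R).

Lemma Sigma1R_shift (t : 'I_n -> R) (i j k : 'I_n) (m u v : R) :
  (forall l, 0 <= t l <= mu l) -> \sum_(l < n) t l = 1 ->
  i != j -> i != k -> j != k ->
  m <= t i <= mu i - m -> m <= t j <= mu j - m -> m <= t k <= mu k - m ->
  `|u| <= m / 2 -> `|v| <= m / 2 ->
  Sigma1R a mu ((bary a t).1 + u * ((a j).1 - (a i).1)%:~R + v * ((a k).1 - (a i).1)%:~R,
                (bary a t).2 + u * ((a j).2 - (a i).2)%:~R + v * ((a k).2 - (a i).2)%:~R).
Proof.
move=> t_bnd t_sum ij ik jk /andP[ti1 ti2] /andP[tj1 tj2] /andP[tk1 tk2].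
rewrite !ler_norml => /andP[u1 u2] /andP[v1 v2].
pose s l := t l + (l == j)%:R * u + (l == k)%:R * v - (l == i)%:R * (u + v).
have s_comb F : \sum_(l < n) s l * F l = \sum_(l < n) t l * F l + u * (F j - F i) + v * (F k - F i).
  rewrite (eq_bigr (fun l => t l * F l + (l == j)%:R * (u * F l) + (l == k)%:R * (v * F l)
                              - (l == i)%:R * ((u + v) * F l))); last by move=> l _; rewrite /s; ring.
  by rewrite sumrB !big_split /= !sum_dirac; ring.
exists s; split; [move=> l | split].
- rewrite /s; case: (eqVneq l i) => [->|li].
    by move: ij ik => /negPf-> /negPf->; rewrite !mul0r !mul1r; apply/andP; split; lra.
  case: (eqVneq l j) => [->|lj].
    by move: jk => /negPf->; rewrite !mul0r !mul1r; apply/andP; split; lra.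
  case: (eqVneq l k) => [->|lk]; first by rewrite !mul0r !mul1r; apply/andP; split; lra.
  by rewrite !mul0r !addr0 subr0.
- by have := s_comb (fun => 1); rewrite !subrr !mulr0 !addr0 !(eq_bigr _ (fun l _ => mulr1 _)) t_sum.
- by rewrite !s_comb !intrB.
Qed.

Lemma free_repr_interior (t : 'I_n -> R) (z : int * int) :
  free_repr a mu t z -> interior (Sigma1R a mu) (toR2 R z).
Proof.
move=> [t_bnd t_sum <- [i [j [k [/andP[ti1 ti2] /andP[tj1 tj2] /andP[tk1 tk2] cross_neq0]]]]].
have ij : i != j by apply: contraNneq cross_neq0 => ->; rewrite /cross !subrr !mul0r subrr.
have ik : i != k by apply: contraNneq cross_neq0 => ->; rewrite /cross !subrr !mulr0 subrr.
have jk : j != k by apply: contraNneq cross_neq0 => ->; rewrite /cross mulrC subrr.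
pose m := Num.min (Num.min (Num.min (t i) (mu i - t i)) (Num.min (t j) (mu j - t j)))
                  (Num.min (t k) (mu k - t k)).
have m_gt0 : 0 < m by rewrite !lt_min !subr_gt0 ti1 ti2 tj1 tj2 tk1 tk2.
have m_le l : m <= t l -> m <= mu l - t l -> m <= t l <= mu l - m.
  by move=> -> ?; rewrite lerBrDr addrC -lerBrDr.
have [mi mj mk] : [/\ m <= t i <= mu i - m, m <= t j <= mu j - m & m <= t k <= mu k - m].
  by split; apply: m_le; rewrite /m !ge_min lexx ?orbT.
set P1 : R := ((a j).1 - (a i).1)%:~R; set P2 : R := ((a j).2 - (a i).2)%:~R.
set Q1 : R := ((a k).1 - (a i).1)%:~R; set Q2 : R := ((a k).2 - (a i).2)%:~R.
have D_ge1 : 1 <= `|P1 * Q2 - P2 * Q1|.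
  by rewrite -!intrM -intrB -intr_norm ler1z -gtz0_ge1 normr_gt0.
pose K := `|P1| + `|P2| + `|Q1| + `|Q2| + 1.
have K_gt0 : 0 < K by rewrite ltr_wpDl ?ltr01 // !addr_ge0.
apply: (@interior_box _ _ _ (m / (2 * K))) => [|w w1 w2]; first by rewrite divr_gt0 ?mulr_gt0.
have [u [v [eq1 eq2 ub vb]]] := solve2_small D_ge1 (ltW w1) (ltW w2).
have eK : m / (2 * K) * K = m / 2 by field; rewrite gt_eqF.
have small x y : x + y <= K -> m / (2 * K) * (x + y) <= m / 2.
  by move=> xyK; rewrite -eK ler_wpM2l // divr_ge0 ?mulr_ge0 // ltW.
have u_small : `|u| <= m / 2.
  by apply: le_trans ub (small _ _ _); rewrite /K; have := normr_ge0 P1; have := normr_ge0 P2; lra.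
have v_small : `|v| <= m / 2.
  by apply: le_trans vb (small _ _ _); rewrite /K; have := normr_ge0 Q1; have := normr_ge0 Q2; lra.
have := Sigma1R_shift t_bnd t_sum ij ik jk mi mj mk u_small v_small.
rewrite -/P1 -/P2 -/Q1 -/Q2.
suff -> : w = ((bary a t).1 + u * P1 + v * Q1, (bary a t).2 + u * P2 + v * Q2) by [].
by case: w eq1 eq2 {w1 w2} => w1 w2 /= eq1 eq2; congr pair; lra.
Qed.

End FreeRepresentation.

Definition frame (u v o p : int * int) : int * int :=
  (u.1 * (p.1 - o.1) + u.2 * (p.2 - o.2), v.1 * (p.2 - o.2) - v.2 * (p.1 - o.1)).

Definition unframe (u v o q : int * int) : int * int :=
  (o.1 + q.1 * v.1 - q.2 * u.2, o.2 + q.1 * v.2 + q.2 * u.1).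

Section Frame.
Variables (u v o : int * int).
Hypothesis uv1 : u.1 * v.1 + u.2 * v.2 = 1.

Lemma frameK : cancel (frame u v o) (unframe u v o).
Proof.
move=> p; rewrite /frame /unframe [RHS]surjective_pairing /=; congr pair.
  transitivity (o.1 + (p.1 - o.1) * (u.1 * v.1 + u.2 * v.2)); first ring.
  by rewrite uv1 mulr1 addrC subrK.
transitivity (o.2 + (p.2 - o.2) * (u.1 * v.1 + u.2 * v.2)); first ring.
by rewrite uv1 mulr1 addrC subrK.
Qed.

Lemma cross_frame (p q r : int * int) :
  cross (frame u v o p) (frame u v o q) (frame u v o r) = cross p q r.
Proof.
transitivity (cross p q r * (u.1 * v.1 + u.2 * v.2)); last by rewrite uv1 mulr1.
by rewrite /cross /frame /=; ring.
Qed.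

Variable R : realType.

Let uvR : (u.1%:~R * v.1%:~R + u.2%:~R * v.2%:~R : R) = 1.
Proof. by rewrite -!intrM -intrD uv1. Qed.

Lemma on_line_frame (c1 c2 c0 : R) : (c1, c2) != (0, 0) ->
  exists d1 d2 d0 : R, (d1, d2) != (0, 0) /\
    forall p, on_line c1 c2 c0 (toR2 R (frame u v o p)) = on_line d1 d2 d0 (toR2 R p).
Proof.
move=> c_neq0.
pose d1 := c1 * u.1%:~R - c2 * v.2%:~R; pose d2 := c1 * u.2%:~R + c2 * v.1%:~R.
exists d1, d2, (c0 + (d1 * o.1%:~R + d2 * o.2%:~R)); split.
  apply: contraNneq c_neq0 => -[d1_0 d2_0].
  have c1E : c1 = v.1%:~R * d1 + v.2%:~R * d2.
    by rewrite -[LHS]mulr1 -[X in _ * X]uvR /d1 /d2; ring.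
  have c2E : c2 = u.1%:~R * d2 - u.2%:~R * d1.
    by rewrite -[LHS]mulr1 -[X in _ * X]uvR /d1 /d2; ring.
  by rewrite c1E c2E d1_0 d2_0 !mulr0 addr0 subr0.
move=> p; rewrite /on_line /toR2 /frame /= -subr_eq; congr (_ == _).
by rewrite !(intrD, intrN, intrM) /d1 /d2; ring.
Qed.

Lemma free_repr_frame (n : nat) (a : 'I_n -> int * int) (mu t : 'I_n -> R) (z : int * int) :
  free_repr (frame u v o \o a) mu t z -> free_repr a mu t (unframe u v o z).
Proof.
move=> [t_bnd t_sum t_bary [i [j [k [ti tj tk cross_neq0]]]]].
split => //; last by exists i, j, k; rewrite -cross_frame.
move: t_bary; rewrite /bary /toR2 /unframe /= => -[tX tY].
have sum_t (c : R) : c = \sum_(l < n) t l * c by rewrite -mulr_suml t_sum mul1r.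
rewrite !(intrD, intrN, intrM) -tX -tY (sum_t o.1%:~R) (sum_t o.2%:~R).
rewrite !mulr_suml -!big_split -sumrN -big_split /=; congr pair; apply: eq_bigr => l _.
  by rewrite -{1}(frameK (a l)) /unframe /= !(intrD, intrN, intrM); ring.
by rewrite -{1}(frameK (a l)) /unframe /= !(intrD, intrN, intrM); ring.
Qed.

Lemma frame_opp (p : int * int) :
  frame (- u) (- v) o p = (- (frame u v o p).1, - (frame u v o p).2).
Proof. by rewrite /frame /=; congr pair; ring. Qed.

Lemma on_line_axis (c1 c2 c0 : R) (g : int) : (c1, c2) != (0, 0) -> g != 0 ->
  on_line c1 c2 c0 (toR2 R o) -> on_line c1 c2 c0 (toR2 R (o.1 + g * v.1, o.2 + g * v.2)) ->
  forall p, on_line c1 c2 c0 (toR2 R p) = ((frame u v o p).2 == 0).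
Proof.
move=> c_neq0 g_neq0 /eqP on_o /eqP on_ov p.
have cv : c1 * v.1%:~R + c2 * v.2%:~R = 0.
  have E : (c1 * v.1%:~R + c2 * v.2%:~R) * g%:~R = c0 - c0.
    by rewrite -[X in X - _]on_ov -[X in _ - X]on_o /toR2 /= !(intrD, intrM); ring.
  by apply: (mulIf (_ : g%:~R != 0 :> R)); rewrite ?intr_eq0 // E subrr mul0r.
pose lam := c2 * u.1%:~R - c1 * u.2%:~R.
have c1E : c1 = - v.2%:~R * lam.
  transitivity (c1 * (u.1%:~R * v.1%:~R + u.2%:~R * v.2%:~R) - u.1%:~R * (c1 * v.1%:~R + c2 * v.2%:~R)).
    by rewrite uvR cv mulr1 mulr0 subr0.
  by rewrite /lam; ring.
have c2E : c2 = v.1%:~R * lam.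
  transitivity (c2 * (u.1%:~R * v.1%:~R + u.2%:~R * v.2%:~R) - u.2%:~R * (c1 * v.1%:~R + c2 * v.2%:~R)).
    by rewrite uvR cv mulr1 mulr0 subr0.
  by rewrite /lam; ring.
have lam_neq0 : lam != 0.
  by apply: contra c_neq0 => /eqP lam0; rewrite c1E c2E lam0 !mulr0.
rewrite /on_line /toR2 /frame /= -on_o -subr_eq0.
have -> : c1 * p.1%:~R + c2 * p.2%:~R - (c1 * o.1%:~R + c2 * o.2%:~R)
          = lam * (v.1 * (p.2 - o.2) - v.2 * (p.1 - o.1))%:~R.
  by rewrite c1E c2E !(intrD, intrB, intrM); ring.
by rewrite mulf_eq0 (negbTE lam_neq0) intr_eq0.
Qed.

End Frame.

Lemma primitive_direction (d : int * int) : d != (0, 0) ->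
  exists u v : int * int, exists g : int, [/\ u.1 * v.1 + u.2 * v.2 = 1, d.1 = g * v.1 & d.2 = g * v.2].
Proof.
move=> d_neq0; pose g := gcdz d.1 d.2.
have g_neq0 : g != 0.
  by rewrite gcdz_eq0; apply: contra d_neq0 => /andP[/eqP d1 /eqP d2]; rewrite [d]surjective_pairing d1 d2.
have [v1E v2E] : (d.1 %/ g)%Z * g = d.1 /\ (d.2 %/ g)%Z * g = d.2.
  by split; apply: divzK; [exact: dvdz_gcdl | exact: dvdz_gcdr].
have [u1 [u2 bezout]] := Bezoutz d.1 d.2.
exists (u1, u2), ((d.1 %/ g)%Z, (d.2 %/ g)%Z), g; split; rewrite /= ?[g * _]mulrC ?v1E ?v2E //.
apply: (mulIf g_neq0); rewrite mul1r -[RHS]bezout -[in RHS]v1E -[in RHS]v2E; ring.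
Qed.


Section Step4.
Variables (R : realType) (j : int).

Definition step4 (c1 c2 c3 c4 : R) (x : int) : R :=
  if x < j then c1 else if x == j then c2 else if x == j + 1 then c3 else c4.

Lemma step4E (c1 c2 c3 c4 : R) (x : int) :
  step4 c1 c2 c3 c4 x =
  c1 * (x < j)%R%:R + c2 * (x == j)%R%:R + c3 * (x == j + 1)%R%:R + c4 * (j + 1 < x)%R%:R.
Proof.
rewrite /step4; have [x_lt|x_ge] := ltrP x j.
  have [-> -> ->] : [/\ (x == j) = false, (x == j + 1) = false & (j + 1 < x) = false] by split; lia.
  by rewrite !mulr0 !addr0 mulr1.
have [x_eq|x_neq] := eqVneq x j.
  have [-> ->] : (x == j + 1) = false /\ (j + 1 < x) = false by split; lia.
  by rewrite !mulr0 add0r !addr0 mulr1.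
have [x_eq1|x_neq1] := eqVneq x (j + 1).
  have -> : (j + 1 < x) = false by lia.
  by rewrite !mulr0 !add0r addr0 mulr1.
have -> : (j + 1 < x) = true by lia.
by rewrite !mulr0 !add0r mulr1.
Qed.

Lemma step4_const (c : R) (x : int) : step4 c c c c x = c.
Proof. by rewrite /step4; case: (x < j); case: (x == j); case: (x == j + 1). Qed.

Lemma step4_sum (n : nat) (X : 'I_n -> int) (nu : 'I_n -> R) (c1 c2 c3 c4 : R) :
  \sum_(i < n) nu i * step4 c1 c2 c3 c4 (X i) =
  c1 * \sum_(i | X i < j) nu i + c2 * \sum_(i | X i == j) nu i
  + c3 * \sum_(i | X i == j + 1) nu i + c4 * \sum_(i | j + 1 < X i) nu i.
Proof.
rewrite -(sum_indicator nu (fun i => X i < j)) -(sum_indicator nu (fun i => X i == j)).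
rewrite -(sum_indicator nu (fun i => X i == j + 1)) -(sum_indicator nu (fun i => j + 1 < X i)).
rewrite !mulr_sumr -!big_split /=.
by apply: eq_bigr => i _; rewrite step4E; ring.
Qed.

Lemma step4_ge0_le1 (c1 c2 c3 c4 : R) (x : int) :
  0 <= c1 <= 1 -> 0 <= c2 <= 1 -> 0 <= c3 <= 1 -> 0 <= c4 <= 1 ->
  0 <= step4 c1 c2 c3 c4 x <= 1.
Proof. by move=> *; rewrite /step4; case: (x < j); case: (x == j); case: (x == j + 1). Qed.

Lemma step4B (c1 c2 c3 c4 d1 d2 d3 d4 : R) (x : int) :
  step4 c1 c2 c3 c4 x - step4 d1 d2 d3 d4 x = step4 (c1 - d1) (c2 - d2) (c3 - d3) (c4 - d4) x.
Proof. by move=> *; rewrite /step4; case: (x < j); case: (x == j); case: (x == j + 1). Qed.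

Lemma step4_offset_ge (c1 c2 c3 c4 : R) (x : int) : c1 <= 0 -> 0 <= c4 ->
  step4 (- c1) 0 c3 (2 * c4) x <= step4 c1 c2 c3 c4 x * (x - j)%:~R.
Proof.
move=> c1_le0 c4_ge0; rewrite /step4 -subr_ge0.
case: ifP => x1.
  have d_le : (x - j + 1)%:~R <= 0 :> R by rewrite lerz0; lia.
  have -> : c1 * (x - j)%:~R - - c1 = c1 * (x - j + 1)%:~R by rewrite intrD; ring.
  by rewrite mulr_le0.
case: ifP => [/eqP ->|x2]; first by rewrite subrr mulr0 subrr.
case: ifP => [/eqP ->|x3]; first by rewrite addrAC subrr add0r mulr1 subrr.
have d_ge : 0 <= (x - j - 2)%:~R :> R by rewrite ler0z; lia.
have -> : c4 * (x - j)%:~R - 2 * c4 = c4 * (x - j - 2)%:~R by rewrite intrB; ring.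
by rewrite mulr_ge0.
Qed.

End Step4.

Section SpreadOnALine.
Variables (R : realType) (n : nat) (X : 'I_n -> int) (nu : 'I_n -> R).
Hypotheses (nu_ge0 : forall i, 0 <= nu i)
           (fiber_le : forall k : int, \sum_(i | X i == k) nu i <= 1/2)
           (nu_sum : \sum_(i < n) nu i = 3/2).

Lemma exists_balanced_cut : exists j : int, 1/2 <= \sum_(i | j < X i) nu i <= 1.
Proof.
pose G k := \sum_(i | k < X i) nu i.
pose K := (\sum_(i < n) `|X i|%N).+1.
have X_bnd i : - (K%:Z) < X i < K%:Z.
  have : (`|X i| <= \sum_(l < n) `|X l|)%N by rewrite (bigD1 i) //= leq_addr.
  rewrite /K; lia.
have GK : G K%:Z = 0 by rewrite /G big1 // => i; have := X_bnd i; lia.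
have GNK : G (- K%:Z) = 3/2.
  by rewrite /G -nu_sum [RHS](bigID (fun i => - K%:Z < X i)) /= [X in _ + X]big1 ?addr0 // => i;
     have := X_bnd i; lia.
pose P m := 1/2 <= G (m%:Z - K%:Z).
have [m /andP[Pm notPm1]] : exists m, P m && ~~ P m.+1.
  apply: (@nat_threshold P (2 * K)); rewrite /P.
    by rewrite sub0r GNK; lra.
  have -> : (2 * K)%N%:Z - K%:Z = K%:Z by lia.
  by rewrite GK -ltNge; lra.
have G_step : G (m%:Z - K%:Z) = G (m.+1%:Z - K%:Z) + \sum_(i | X i == m.+1%:Z - K%:Z) nu i.
  rewrite /G (bigID (fun i => X i == m.+1%:Z - K%:Z)) /= addrC; congr (_ + _).
    by apply: eq_bigl => i; lia.
  by apply: eq_bigl => i; lia.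
exists (m%:Z - K%:Z); rewrite -/(G _) [1/2 <= _]Pm /= G_step.
by move: notPm1; rewrite /P -ltNge; have := fiber_le (m.+1%:Z - K%:Z); lra.
Qed.

Lemma step4_gap (j : int) (f1 f2 f3 f4 g1 g2 g3 g4 : R) :
  \sum_(i < n) nu i * step4 j f1 f2 f3 f4 (X i) = \sum_(i < n) nu i * step4 j g1 g2 g3 g4 (X i) ->
  g1 <= f1 -> f4 <= g4 ->
  (f1 - g1) * \sum_(i | X i < j) nu i + (g3 - f3) * \sum_(i | X i == j + 1) nu i
    + 2 * (g4 - f4) * \sum_(i | j + 1 < X i) nu i
  <= \sum_(i < n) nu i * step4 j g1 g2 g3 g4 (X i) * (X i)%:~R
     - \sum_(i < n) nu i * step4 j f1 f2 f3 f4 (X i) * (X i)%:~R.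
Proof.
move=> same_mass g1f1 f4g4.
pose d x := step4 j (g1 - f1) (g2 - f2) (g3 - f3) (g4 - f4) x.
have d_mass : \sum_(i < n) nu i * d (X i) = 0.
  rewrite (eq_bigr (fun i => nu i * step4 j g1 g2 g3 g4 (X i) - nu i * step4 j f1 f2 f3 f4 (X i))).
    by rewrite sumrB same_mass subrr.
  by move=> i _; rewrite /d -step4B mulrBr.
have -> : \sum_(i < n) nu i * step4 j g1 g2 g3 g4 (X i) * (X i)%:~R
          - \sum_(i < n) nu i * step4 j f1 f2 f3 f4 (X i) * (X i)%:~R
        = \sum_(i < n) nu i * (d (X i) * (X i - j)%:~R).
  transitivity (\sum_(i < n) (nu i * step4 j g1 g2 g3 g4 (X i) * (X i)%:~R
                              - nu i * step4 j f1 f2 f3 f4 (X i) * (X i)%:~R)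
                - j%:~R * \sum_(i < n) nu i * d (X i)).
    by rewrite d_mass mulr0 subr0 sumrB.
  rewrite mulr_sumr -sumrB.
  by apply: eq_bigr => i _; rewrite /d -step4B intrB; ring.
have g1f1' : g1 - f1 <= 0 by rewrite subr_le0.
have f4g4' : 0 <= g4 - f4 by rewrite subr_ge0.
apply: le_trans (ler_sum _ (fun i _ => ler_wpM2l (nu_ge0 i) (@step4_offset_ge R j _ (g2 - f2) (g3 - f3) _ (X i) g1f1' f4g4'))).
by rewrite step4_sum mul0r addr0 opprB.
Qed.

Lemma exists_spread_weights (al : R) : 1/2 <= al <= 1 ->
  exists sm sp : 'I_n -> R,
    [/\ forall i, 0 <= sm i <= nu i, forall i, 0 <= sp i <= nu i,
        \sum_(i < n) sm i = al, \sum_(i < n) sp i = al &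
        \sum_(i < n) sm i * (X i)%:~R + 1 <= \sum_(i < n) sp i * (X i)%:~R].
Proof.
case/andP=> al_lo al_hi.
have [j /andP[cut_lo cut_hi]] := exists_balanced_cut.
set A1 := \sum_(i | X i < j) nu i; set A2 := \sum_(i | X i == j) nu i.
set A3 := \sum_(i | X i == j + 1) nu i; set A4 := \sum_(i | j + 1 < X i) nu i.
have [A1_ge0 A2_ge0 A3_ge0 A4_ge0] : [/\ 0 <= A1, 0 <= A2, 0 <= A3 & 0 <= A4].
  by split; apply: sumr_ge0.
have [A2_le A3_le] : A2 <= 1/2 /\ A3 <= 1/2 by split; apply: fiber_le.
have A_sum : A1 + A2 + A3 + A4 = 3/2.
  rewrite -nu_sum -[A1]mul1r -[A2]mul1r -[A3]mul1r -[A4]mul1r -step4_sum.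
  by apply: eq_bigr => i _; rewrite step4_const mulr1.
have A34 : A3 + A4 = \sum_(i | j < X i) nu i.
  rewrite (bigID (fun i => X i == j + 1)) /=; congr (_ + _); apply: eq_bigl => i; lia.
rewrite -A34 in cut_lo cut_hi.
set S1 := Num.min al A1; set S2 := Num.min al (A1 + A2); set S3 := Num.min al (A1 + A2 + A3).
set T1 := Num.min al A4; set T2 := Num.min al (A3 + A4); set T3 := Num.min al (A2 + (A3 + A4)).
have fill x y A : x <= y -> y - x = A -> 0 <= Num.min al y - Num.min al x <= A.
  by move=> xy <-; apply: min_sub_min_ge0_le.
have min_al_top : Num.min al (3/2) = al by rewrite min_l //; lra.
have [m1 m2 m3 m4] : [/\ 0 <= S1 <= A1, 0 <= S2 - S1 <= A2, 0 <= S3 - S2 <= A3 & 0 <= al - S3 <= A4].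
  rewrite /S1 /S2 /S3; split; [ | by apply: fill; lra | by apply: fill; lra | ].
  - by apply/andP; split; [rewrite le_min A1_ge0 andbT; lra | rewrite ge_min lexx orbT].
  - by have := fill (A1 + A2 + A3) (3/2) A4; rewrite min_al_top; apply; lra.
have [p4 p3 p2 p1] : [/\ 0 <= T1 <= A4, 0 <= T2 - T1 <= A3, 0 <= T3 - T2 <= A2 & 0 <= al - T3 <= A1].
  rewrite /T1 /T2 /T3; split; [ | by apply: fill; lra | by apply: fill; lra | ].
  - by apply/andP; split; [rewrite le_min A4_ge0 andbT; lra | rewrite ge_min lexx orbT].
  - by have := fill (A2 + (A3 + A4)) (3/2) A1; rewrite min_al_top; apply; lra.
have [low mid high] : [/\ al + (1 - (A3 + A4)) <= S1 + T3, al + 1/2 <= S2 + T2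
                        & al + (A3 + A4 - 1/2) <= S3 + T1].
  split; rewrite addrC.
  - by rewrite /T3 (_ : A2 + (A3 + A4) = 3/2 - A1); [apply: min_split_ge | ]; lra.
  - by rewrite /T2 (_ : A3 + A4 = 3/2 - (A1 + A2)); [apply: min_split_ge | ]; lra.
  - by rewrite /T1 (_ : A4 = 3/2 - (A1 + A2 + A3)); [apply: min_split_ge | ]; lra.
have [f1_01 f1E] := frac_of_le m1; have [f2_01 f2E] := frac_of_le m2.
have [f3_01 f3E] := frac_of_le m3; have [f4_01 f4E] := frac_of_le m4.
have [g1_01 g1E] := frac_of_le p1; have [g2_01 g2E] := frac_of_le p2.
have [g3_01 g3E] := frac_of_le p3; have [g4_01 g4E] := frac_of_le p4.
set f1 := S1 / A1 in f1_01 f1E; set f2 := (S2 - S1) / A2 in f2_01 f2E.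
set f3 := (S3 - S2) / A3 in f3_01 f3E; set f4 := (al - S3) / A4 in f4_01 f4E.
set g1 := (al - T3) / A1 in g1_01 g1E; set g2 := (T3 - T2) / A2 in g2_01 g2E.
set g3 := (T2 - T1) / A3 in g3_01 g3E; set g4 := T1 / A4 in g4_01 g4E.
have sm_mass : \sum_(i < n) nu i * step4 j f1 f2 f3 f4 (X i) = al.
  by rewrite step4_sum -/A1 -/A2 -/A3 -/A4 f1E f2E f3E f4E; ring.
have sp_mass : \sum_(i < n) nu i * step4 j g1 g2 g3 g4 (X i) = al.
  by rewrite step4_sum -/A1 -/A2 -/A3 -/A4 g1E g2E g3E g4E; ring.
have weight_rng (c1 c2 c3 c4 : R) i : 0 <= c1 <= 1 -> 0 <= c2 <= 1 -> 0 <= c3 <= 1 -> 0 <= c4 <= 1 ->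
    0 <= nu i * step4 j c1 c2 c3 c4 (X i) <= nu i.
  move=> c1r c2r c3r c4r.
  have /andP[s0 s1] := step4_ge0_le1 j (X i) c1r c2r c3r c4r.
  by rewrite mulr_ge0 ?ler_piMr.
exists (fun i => nu i * step4 j f1 f2 f3 f4 (X i)), (fun i => nu i * step4 j g1 g2 g3 g4 (X i)).
split=> [i|i|||]; [exact: weight_rng | exact: weight_rng | exact: sm_mass | exact: sp_mass | ].
have g1f1 : g1 <= f1 by rewrite ler_wpM2r ?invr_ge0 //; lra.
have f4g4 : f4 <= g4 by rewrite ler_wpM2r ?invr_ge0 //; lra.
have := step4_gap (etrans sm_mass (esym sp_mass)) g1f1 f4g4.
rewrite -/A1 -/A3 -/A4 !mulrBl -[2 * _ * A4]mulrA mulrBl f1E g1E f3E g3E f4E g4E.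
lra.
Qed.

End SpreadOnALine.

Section AxisConfiguration.
Variables (R : realType) (n : nat) (X Y : 'I_n -> int) (mu : 'I_n -> R).
Hypotheses (XY_inj : forall i j, X i = X j -> Y i = Y j -> i = j)
           (mu_ge0 : forall i, 0 <= mu i) (mu_le : forall i, mu i <= 1/2)
           (axis_mass : \sum_(i | Y i == 0) mu i = 3/2)
           (mu_total : \sum_(i < n) mu i = 399%:R / 100%:R)
           (line_le : forall c1 c2 c0 : R, (c1, c2) != (0, 0) ->
              points_in (fun i => (X i, Y i)) mu (on_line c1 c2 c0) <= 3/2).

Lemma free_repr_interpolate (sm sp eta : 'I_n -> R) (al : R) (k : int) (f : 'I_n) :
  (forall i, 0 <= sm i <= mu i) -> (forall i, 0 <= sp i <= mu i) ->
  (forall i, Y i != 0 -> sm i = 0 /\ sp i = 0) ->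
  \sum_(i < n) sm i = al -> \sum_(i < n) sp i = al ->
  \sum_(i < n) sm i * (X i)%:~R + 1 <= \sum_(i < n) sp i * (X i)%:~R ->
  (forall i, 0 <= eta i <= mu i) -> (forall i, Y i == 0 -> eta i = 0) ->
  \sum_(i < n) eta i = 1 - al -> \sum_(i < n) eta i * (Y i)%:~R = k%:~R -> 0 < eta f < mu f ->
  (forall z : int, \sum_(i < n) sm i * (X i)%:~R + \sum_(i < n) eta i * (X i)%:~R != z%:~R) ->
  exists t z, free_repr (fun i => (X i, Y i)) mu t z.
Proof.
move=> sm_bnd sp_bnd sm_sp_axis sm_mass sp_mass gap eta_bnd eta_axis eta_mass eta_Y eta_f notint.
set B := \sum_(i < n) sm i * (X i)%:~R in gap notint.
set T := \sum_(i < n) sp i * (X i)%:~R in gap.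
set c := \sum_(i < n) eta i * (X i)%:~R in notint.
have [x0 /andP[x0_lo x0_hi]] : exists z : int, B + c < z%:~R < T + c.
  by apply: exists_int_between => //; lra.
pose l := (T + c - x0%:~R) / (T - B).
have TB : 0 < T - B by lra.
have l01 : 0 < l < 1 by rewrite divr_gt0 ?ltr_pdivrMr ?mul1r //=; lra.
pose t i := l * sm i + (1 - l) * sp i + eta i.
have t_sum F : \sum_(i < n) t i * F i
    = l * \sum_(i < n) sm i * F i + (1 - l) * \sum_(i < n) sp i * F i + \sum_(i < n) eta i * F i.
  by rewrite !mulr_sumr -!big_split /=; apply: eq_bigr => i _; rewrite /t; ring.
have axis_sum (w : 'I_n -> R) : (forall i, Y i != 0 -> w i = 0) -> \sum_(i < n) w i * (Y i)%:~R = 0.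
  by move=> w_axis; apply: big1 => i _; have [->|/w_axis ->] := eqVneq (Y i) 0; rewrite ?mulr0 ?mul0r.
have off_axis i : Y i != 0 -> t i = eta i.
  by move=> /sm_sp_axis[sm0 sp0]; rewrite /t sm0 sp0 !mulr0 !add0r.
have on_axis i : Y i == 0 -> t i = l * sm i + (1 - l) * sp i.
  by move=> /eta_axis eta0; rewrite /t eta0 addr0.
have [i1 sm_sp1] : exists i1, sm i1 != sp i1.
  have [|i1 sm_sp1] := @exists_neq_of_sum_neq _ _ (fun i => sm i * (X i)%:~R) (fun i => sp i * (X i)%:~R).
    by rewrite -/B -/T; apply/eqP => BT; lra.
  by exists i1; apply: contraNneq sm_sp1 => ->.
have [i2 i21 sm_sp2] := exists_other_neq (etrans sm_mass (esym sp_mass)) sm_sp1.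
have axis_of i : sm i != sp i -> Y i == 0.
  by apply: contraTT => /sm_sp_axis[-> ->]; rewrite eqxx.
have free_axis i : sm i != sp i -> 0 < t i < mu i.
  by move=> neq; rewrite on_axis ?axis_of //; exact: strict_convex_between.
have f_off : Y f != 0 by apply: contraTneq eta_f => /eqP /eta_axis ->; rewrite ltxx.
exists t, (x0, k); split.
- move=> i; case: (eqVneq (Y i) 0) => [/eqP Y0|/off_axis ->]; last exact: eta_bnd.
  have [eq|/free_axis/andP[? ?]] := eqVneq (sm i) (sp i); last by rewrite !ltW.
  by rewrite on_axis // eq -mulrDl addrC subrK mul1r.
- have := t_sum (fun => 1); rewrite !(eq_bigr _ (fun i _ => mulr1 _)) sm_mass sp_mass eta_mass => ->.
  by ring.
- rewrite /bary /toR2 /= !t_sum -/B -/T -/c eta_Y !axis_sum //; last by move=> i /sm_sp_axis[].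
    by congr pair; rewrite ?mulr0 ?add0r // /l; field; rewrite gt_eqF.
  by move=> i /sm_sp_axis[].
exists i1, i2, f; split; [exact: free_axis | exact: free_axis | by rewrite off_axis | ].
rewrite /cross /= (eqP (axis_of _ sm_sp1)) (eqP (axis_of _ sm_sp2)) !subrr mul0r subr0 subr0.
rewrite mulf_neq0 // subr_eq0; apply: contra i21 => /eqP X21.
by apply/eqP/XY_inj; rewrite // (eqP (axis_of _ sm_sp1)) (eqP (axis_of _ sm_sp2)).
Qed.

Lemma axis_fiber_le (x : int) :
  \sum_(i | X i == x) (if Y i == 0 then mu i else 0) <= 1/2.
Proof.
case: (pickP (fun i => (X i == x) && (Y i == 0))) => [i0 /andP[/eqP Xi0 /eqP Yi0]|none].
  rewrite (bigD1 i0) /= ?Xi0 // Yi0 eqxx big1 ?addr0 // => i /andP[/eqP Xi i_i0].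
  case: eqP => // Yi; case/eqP: i_i0; apply: XY_inj; by rewrite ?Xi ?Xi0 ?Yi ?Yi0.
rewrite big1 // => i Xi; have := none i; rewrite Xi /=; by case: (Y i == 0).
Qed.

Lemma free_repr_of_offaxis_weights (eta v : 'I_n -> R) (be : R) (k : int) :
  (forall i, 0 <= eta i <= mu i) -> (forall i, Y i == 0 -> eta i = 0) ->
  \sum_(i < n) eta i = be -> 0 <= be <= 1/2 -> \sum_(i < n) eta i * (Y i)%:~R = k%:~R ->
  \sum_(i < n) v i = 0 -> \sum_(i < n) v i * (Y i)%:~R = 0 -> \sum_(i < n) v i * (X i)%:~R != 0 ->
  (forall i, v i != 0 -> 0 < eta i < mu i) ->
  exists t z, free_repr (fun i => (X i, Y i)) mu t z.
Proof.
move=> eta_bnd eta_axis eta_mass /andP[be_ge0 be_le] eta_Y v_sum v_Y v_X v_free.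
pose nu i := if Y i == 0 then mu i else 0.
have nu_ge0 i : 0 <= nu i by rewrite /nu; case: ifP.
have nu_sum : \sum_(i < n) nu i = 3/2 by rewrite -axis_mass [RHS]big_mkcond.
have al_rng : 1/2 <= 1 - be <= 1 by apply/andP; split; lra.
have [sm [sp [sm_bnd sp_bnd sm_mass sp_mass gap]]] :=
  exists_spread_weights nu_ge0 axis_fiber_le nu_sum al_rng.
have nu_le_mu i : nu i <= mu i by rewrite /nu; case: ifP.
have nu_axis i : Y i != 0 -> nu i = 0 by rewrite /nu => /negbTE ->.
have sm_sp_axis i : Y i != 0 -> sm i = 0 /\ sp i = 0.
  move=> /nu_axis nu0; have := sm_bnd i; have := sp_bnd i; rewrite nu0.
  by move=> /andP[? ?] /andP[? ?]; split; apply/eqP; rewrite eq_le; apply/andP.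
have sm_bnd' i : 0 <= sm i <= mu i.
  by have /andP[? ?] := sm_bnd i; rewrite (le_trans _ (nu_le_mu i)) ?andbT.
have sp_bnd' i : 0 <= sp i <= mu i.
  by have /andP[? ?] := sp_bnd i; rewrite (le_trans _ (nu_le_mu i)) ?andbT.
have [f vf] : exists f, v f != 0.
  have [|f] := @exists_neq_of_sum_neq _ _ (fun i => v i * (X i)%:~R) (fun => 0); first by rewrite big1_eq.
  by move=> vXf; exists f; apply: contraNneq vXf => ->; rewrite mul0r.
have eta_f := v_free f vf.
have eta_mass' : \sum_(i < n) eta i = 1 - (1 - be) by rewrite eta_mass opprB addrC subrK.
set N := \sum_(i < n) v i * (X i)%:~R in v_X.
have [e e_gt0 [e_free eN]] := exists_small_step N v_free.
pose eta' i := eta i + e * v i.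
have eta'_sum (F : 'I_n -> R) :
    \sum_(i < n) eta' i * F i = \sum_(i < n) eta i * F i + e * \sum_(i < n) v i * F i.
  by rewrite mulr_sumr -big_split /=; apply: eq_bigr => i _; rewrite /eta'; ring.
have eta'_bnd i : 0 <= eta' i <= mu i.
  have [v0|/e_free/andP[? ?]] := eqVneq (v i) 0; last by rewrite !ltW.
  by rewrite /eta' v0 mulr0 addr0.
have eta'_axis i : Y i == 0 -> eta' i = 0.
  move=> Y0; have [v0|/v_free] := eqVneq (v i) 0; first by rewrite /eta' v0 mulr0 addr0 eta_axis.
  by rewrite eta_axis // ltxx.
have eta'_mass : \sum_(i < n) eta' i = 1 - (1 - be).
  by have := eta'_sum (fun => 1); rewrite !(eq_bigr _ (fun i _ => mulr1 _)) v_sum mulr0 addr0 eta_mass' => ->.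
have eta'_Y : \sum_(i < n) eta' i * (Y i)%:~R = k%:~R by rewrite eta'_sum v_Y mulr0 addr0.
set B := \sum_(i < n) sm i * (X i)%:~R in gap *.
case: (pselect (exists z : int, B + \sum_(i < n) eta i * (X i)%:~R = z%:~R)) => [[z1 Bz1]|notint].
  apply: (free_repr_interpolate sm_bnd' sp_bnd' sm_sp_axis sm_mass sp_mass gap eta'_bnd eta'_axis
                                eta'_mass eta'_Y (e_free f vf)) => z2.
  rewrite eta'_sum addrA Bz1; apply/negP => /eqP eNz.
  have eN_int : e * N = (z2 - z1)%:~R by rewrite intrB -eNz [_ + e * N]addrC addrK.
  have : 0 < `|e * N| by rewrite normr_gt0 mulf_neq0 // gt_eqF.
  by rewrite eN_int intr_norm_gt0_ge1 -eN_int normrM gtr0_norm //; lra.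
apply: (free_repr_interpolate sm_bnd' sp_bnd' sm_sp_axis sm_mass sp_mass gap eta_bnd eta_axis
                              eta_mass' eta_Y eta_f) => z.
by apply/eqP => Bz; apply: notint; exists z.
Qed.

Lemma collinear_mass_le (p q : 'I_n) : q != p ->
  \sum_(r | cross (X p, Y p) (X q, Y q) (X r, Y r) == 0) mu r <= 3/2.
Proof.
move=> qp; pose c1 : R := (Y q - Y p)%:~R; pose c2 : R := (X p - X q)%:~R.
have c_neq0 : (c1, c2) != (0, 0).
  apply: contra qp => /eqP[/eqP c1_0 /eqP c2_0]; apply/eqP/XY_inj.
    by move: c2_0; rewrite intr_eq0 subr_eq0 => /eqP.
  by move: c1_0; rewrite intr_eq0 subr_eq0 => /eqP.
apply: le_trans (line_le (c1 * (X p)%:~R + c2 * (Y p)%:~R) c_neq0); rewrite le_eqVlt; apply/orP; left.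
apply/eqP/eq_bigl => r.
have E : c1 * (X r)%:~R + c2 * (Y r)%:~R - (c1 * (X p)%:~R + c2 * (Y p)%:~R)
         = - (cross (X p, Y p) (X q, Y q) (X r, Y r))%:~R.
  by rewrite /cross /c1 /c2 /= !(intrD, intrN, intrM); ring.
by rewrite /on_line /toR2 /= -[RHS]subr_eq0 E oppr_eq0 intr_eq0.
Qed.

Lemma row_mass_le (k : int) : \sum_(i | Y i == k) mu i <= 3/2.
Proof.
have e2_neq0 : ((0 : R), (1 : R)) != (0, 0) by rewrite xpair_eqE oner_eq0 andbF.
apply: le_trans (line_le k%:~R e2_neq0).
rewrite le_eqVlt; apply/orP; left; apply/eqP/eq_bigl => i.
by rewrite /on_line /toR2 /= mul0r add0r mul1r eqr_int.
Qed.

Lemma exists_noncollinear_triple (P : pred 'I_n) : 3/2 < \sum_(i | P i) mu i ->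
  exists p q r, [/\ P p /\ 0 < mu p, P q /\ 0 < mu q, P r /\ 0 < mu r
                   & cross (X p, Y p) (X q, Y q) (X r, Y r) != 0].
Proof.
move=> P_mass.
have [half_ge0 half_lt] : 0 <= 1/2 :> R /\ 1/2 < \sum_(i | P i) mu i by split; lra.
have [p [q [qp Pp Pq mup muq]]] := exists_two_pos half_ge0 mu_le half_lt.
pose C r := cross (X p, Y p) (X q, Y q) (X r, Y r) == 0.
have coll_P : \sum_(i | P i && C i) mu i <= 3/2.
  apply: le_trans (collinear_mass_le qp).
  rewrite [X in _ <= X](bigID P) /= -[X in X <= _]addr0 lerD //; last exact: sumr_ge0.
  by rewrite le_eqVlt; apply/orP; left; apply/eqP/eq_bigl => i; rewrite andbC.
have [|r [/andP[Pr pqr] mur]] := @exists_pos_of_sum_gt0 _ _ mu (fun r => P r && ~~ C r).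
  by move: P_mass; rewrite (bigID C) /=; lra.
by exists p, q, r.
Qed.

Lemma exists_direction_triple (p q r : 'I_n) :
  cross (X p, Y p) (X q, Y q) (X r, Y r) != 0 ->
  exists v : 'I_n -> R,
    [/\ \sum_(i < n) v i = 0, \sum_(i < n) v i * (Y i)%:~R = 0,
        \sum_(i < n) v i * (X i)%:~R != 0 & forall i, v i != 0 -> [\/ i = p, i = q | i = r]].
Proof.
move=> pqr; pose a : R := (Y q - Y r)%:~R; pose b : R := (Y r - Y p)%:~R; pose c : R := (Y p - Y q)%:~R.
pose v i := (i == p)%:R * a + (i == q)%:R * b + (i == r)%:R * c.
have v_sum F : \sum_(i < n) v i * F i = a * F p + b * F q + c * F r.
  rewrite (eq_bigr (fun i => (i == p)%:R * (a * F i) + (i == q)%:R * (b * F i)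
                             + (i == r)%:R * (c * F i))); last by move=> i _; rewrite /v; ring.
  by rewrite !big_split /= !sum_dirac.
exists v; split.
- by have := v_sum (fun => 1); rewrite !(eq_bigr _ (fun i _ => mulr1 _)) !mulr1 => ->; rewrite /a /b /c !intrB; ring.
- by rewrite v_sum /a /b /c !intrB; ring.
- rewrite v_sum; apply: contra pqr => /eqP pqr0; rewrite -(intr_eq0 R) -pqr0.
  by apply/eqP; rewrite /cross /a /b /c /= !(intrB, intrM); ring.
- move=> i; have [->|ip] := eqVneq i p; first by constructor 1.
  have [->|iq] := eqVneq i q; first by constructor 2.
  have [->|ir] := eqVneq i r; first by constructor 3.
  by rewrite /v; move: ip iq ir => /negPf-> /negPf-> /negPf->; rewrite !mul0r !addr0 eqxx.
Qed.

Lemma exists_direction_pair (p q : 'I_n) : q != p -> Y p = Y q ->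
  exists v : 'I_n -> R,
    [/\ \sum_(i < n) v i = 0, \sum_(i < n) v i * (Y i)%:~R = 0,
        \sum_(i < n) v i * (X i)%:~R != 0 & forall i, v i != 0 -> i = p \/ i = q].
Proof.
move=> qp Ypq; pose v i : R := (i == p)%:R - (i == q)%:R.
have v_sum F : \sum_(i < n) v i * F i = F p - F q.
  by rewrite (eq_bigr (fun i => (i == p)%:R * F i - (i == q)%:R * F i)) ?sumrB ?sum_dirac // => i _; rewrite /v mulrBl.
exists v; split.
- by have := v_sum (fun => 1); rewrite !(eq_bigr _ (fun i _ => mulr1 _)) subrr.
- by rewrite v_sum Ypq subrr.
- rewrite v_sum subr_eq0 eqr_int; apply: contra qp => /eqP Xpq.
  by apply/eqP/XY_inj.
- move=> i; have [->|ip] := eqVneq i p; first by left.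
  have [->|iq] := eqVneq i q; first by right.
  by rewrite /v; move: ip iq => /negPf-> /negPf->; rewrite subrr eqxx.
Qed.

Lemma sum_two_level_weights (P Q : pred 'I_n) (a b : R) (F : 'I_n -> R) :
  \sum_(i < n) mu i * (a * (P i)%:R + b * (Q i)%:R) * F i
  = a * \sum_(i | P i) mu i * F i + b * \sum_(i | Q i) mu i * F i.
Proof.
rewrite -(sum_indicator (fun i => mu i * F i) P) -(sum_indicator (fun i => mu i * F i) Q).
by rewrite !mulr_sumr -big_split /=; apply: eq_bigr => i _; ring.
Qed.

Lemma off_axis_mass : \sum_(i | Y i != 0) mu i = 399%:R / 100%:R - 3/2.
Proof. by rewrite -mu_total [in RHS](bigID (fun i => Y i == 0)) /= axis_mass addrC addrK. Qed.

Lemma scaled_mass_le (c : R) (i : 'I_n) : 0 <= c <= 1 -> 0 <= c * mu i <= mu i.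
Proof. by case/andP=> c_ge0 c_le1; rewrite mulr_ge0 ?ler_piMl. Qed.

Lemma scaled_mass_free (c : R) (i : 'I_n) : 0 < c < 1 -> 0 < mu i -> 0 < c * mu i < mu i.
Proof. by case/andP=> c_gt0 c_lt1 mu_gt0; rewrite mulr_gt0 // gtr_pMl. Qed.

Lemma free_repr_two_sided :
  0 < \sum_(i | Y i < 0) mu i -> 0 < \sum_(i | 0 < Y i) mu i ->
  exists t z, free_repr (fun i => (X i, Y i)) mu t z.
Proof.
set D := \sum_(i | Y i < 0) mu i; set U := \sum_(i | 0 < Y i) mu i => D_gt0 U_gt0.
set Sdn := \sum_(i | Y i < 0) mu i * - (Y i)%:~R; set Sup := \sum_(i | 0 < Y i) mu i * (Y i)%:~R.
have UD : U + D = 399%:R / 100%:R - 3/2.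
  rewrite -off_axis_mass (bigID (fun i => 0 < Y i)) /=; congr (_ + _); apply: eq_bigl => i; clear; lia.
have U_Sup : U <= Sup.
  by apply: ler_sum => i Yi; rewrite ler_peMr // ler1z; clear -Yi; lia.
have D_Sdn : D <= Sdn.
  by apply: ler_sum => i Yi; rewrite ler_peMr // -intrN ler1z; clear -Yi; lia.
pose M := 8 * (Sdn + Sup).
have M_gt0 : 0 < M by rewrite /M; lra.
pose a := Sdn / M; pose b := Sup / M.
have [Sdn_gt0 Sup_gt0] : 0 < Sdn /\ 0 < Sup by split; lra.
have a01 : 0 < a < 1 by rewrite divr_gt0 // ltr_pdivrMr // mul1r /M; lra.
have b01 : 0 < b < 1 by rewrite divr_gt0 // ltr_pdivrMr // mul1r /M; lra.
pose eta i := mu i * (a * (0 < Y i)%R%:R + b * (Y i < 0)%R%:R).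
have eta_val i : eta i = if 0 < Y i then a * mu i else if Y i < 0 then b * mu i else 0.
  rewrite /eta; case: ltrgt0P => Yi; rewrite /= ?mulr1n ?mulr0n; ring.
have [a01' b01'] : 0 <= a <= 1 /\ 0 <= b <= 1 by case/andP: a01; case/andP: b01; split; apply/andP; split; lra.
have eta_bnd i : 0 <= eta i <= mu i.
  by rewrite eta_val; case: ifP => _; [exact: scaled_mass_le | case: ifP => _; rewrite ?lexx ?mu_ge0 ?scaled_mass_le].
have eta_axis i : Y i == 0 -> eta i = 0 by rewrite eta_val => /eqP ->; rewrite ltxx.
have eta_free i : Y i != 0 -> 0 < mu i -> 0 < eta i < mu i.
  move=> Yi mui; rewrite eta_val; case: ifP => Y_gt0; first exact: scaled_mass_free.
  by case: ifP => Y_lt0; [exact: scaled_mass_free | move: Yi; rewrite neq_lt Y_lt0 Y_gt0].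
have eta_sum F : \sum_(i < n) eta i * F i
    = a * \sum_(i | 0 < Y i) mu i * F i + b * \sum_(i | Y i < 0) mu i * F i.
  exact: sum_two_level_weights.
have eta_mass : \sum_(i < n) eta i = a * U + b * D.
  by have := eta_sum (fun => 1); rewrite !(eq_bigr _ (fun i _ => mulr1 _)).
have eta_Y : \sum_(i < n) eta i * (Y i)%:~R = 0%:~R.
  rewrite eta_sum -/Sup (eq_bigr (fun i => - (mu i * - (Y i)%:~R))) ?sumrN -/Sdn; last first.
    by move=> i _; rewrite mulrN opprK.
  by rewrite /a /b; field; rewrite gt_eqF.
have be_rng : 0 <= a * U + b * D <= 1/2.
  have [[a_gt0 _] [b_gt0 _]] := (andP a01, andP b01).
  have aU : a * U <= a * (U + D) by apply: ler_wpM2l; rewrite ?lerDl ltW.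
  have bD : b * D <= b * (U + D) by apply: ler_wpM2l; rewrite ?lerDr ltW.
  have ab : a * (U + D) + b * (U + D) = (U + D) / 8.
    by rewrite -mulrDl /a /b -mulrDl /M; field; rewrite gt_eqF // addr_gt0.
  apply/andP; split; first by rewrite addr_ge0 // mulr_ge0 // ltW.
  by move: aU bD ab; rewrite UD; clear; lra.
have [|p [q [r [[Yp mup] [Yq muq] [Yr mur] pqr]]]] :=
  @exists_noncollinear_triple (fun i => Y i != 0); first by rewrite off_axis_mass; lra.
have [v [v_sum v_Y v_X v_supp]] := exists_direction_triple pqr.
apply: (free_repr_of_offaxis_weights eta_bnd eta_axis eta_mass be_rng eta_Y v_sum v_Y v_X).
by move=> i /v_supp[] ->; apply: eta_free.
Qed.

Lemma free_repr_one_sided :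
  (forall i, Y i < 0 -> mu i = 0) -> exists t z, free_repr (fun i => (X i, Y i)) mu t z.
Proof.
move=> below0.
set m1 := \sum_(i | Y i == 1) mu i; set H := \sum_(i | 1 < Y i) mu i.
set S2 := \sum_(i | 1 < Y i) mu i * (Y i)%:~R.
have m1H : m1 + H = 399%:R / 100%:R - 3/2.
  rewrite -off_axis_mass (bigID (fun i => Y i < 0)) /= big1 => [|i /andP[_ /below0] //].
  rewrite add0r (bigID (fun i => Y i == 1)) /=; congr (_ + _); apply: eq_bigl => i; clear; lia.
have m1_ge0 : 0 <= m1 by exact: sumr_ge0.
have m1_le : m1 <= 3/2 := row_mass_le 1.
have H2_le : 2 * H <= S2.
  rewrite mulr_sumr; apply: ler_sum => i Yi; rewrite mulrC; apply: ler_wpM2l => //.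
  have : (2 : int) <= Y i by clear -Yi; lia.
  by rewrite -(ler_int R).
have H_ge0 : 0 <= H by exact: sumr_ge0.
have S2_gt1 : 1 < S2 by lra.
have [ka [la [ka01 la01 laS2 be_rng ka_gt0]]] := one_sided_coefficients S2_gt1 H_ge0 H2_le m1_ge0.
pose eta i := mu i * (la * (1 < Y i)%R%:R + ka * (Y i == 1)%R%:R).
have eta_sum F : \sum_(i < n) eta i * F i
    = la * \sum_(i | 1 < Y i) mu i * F i + ka * \sum_(i | Y i == 1) mu i * F i.
  exact: sum_two_level_weights.
have eta_val i : eta i = if 1 < Y i then la * mu i else if Y i == 1 then ka * mu i else 0.
  rewrite /eta; case: ifP => Y1; first by rewrite (gt_eqF Y1) /=; ring.
  by case: ifP => Y2; rewrite /= ?mulr1n ?mulr0n; ring.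
have [la01' ka01'] : 0 <= la <= 1 /\ 0 <= ka <= 1.
  by case/andP: la01; case/andP: ka01; split; apply/andP; split; lra.
have eta_bnd i : 0 <= eta i <= mu i.
  by rewrite eta_val; case: ifP => _; [exact: scaled_mass_le | case: ifP => _; rewrite ?lexx ?mu_ge0 ?scaled_mass_le].
have eta_axis i : Y i == 0 -> eta i = 0 by rewrite eta_val => /eqP ->.
have eta_mass : \sum_(i < n) eta i = la * H + ka * m1.
  by have := eta_sum (fun => 1); rewrite !(eq_bigr _ (fun i _ => mulr1 _)).
have eta_Y : \sum_(i < n) eta i * (Y i)%:~R = 1%:~R.
  by rewrite eta_sum -/S2 (eq_bigr (fun i => mu i)) -/m1 // => i /eqP ->; rewrite mulr1.
have [S2_eq|S2_neq] := eqVneq S2 (2 * H).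
  have Y2 i : 1 < Y i -> 0 < mu i -> Y i = 2.
    move=> Yi mui; have excess_ge0 l : 1 < Y l -> 0 <= mu l * ((Y l)%:~R - 2).
      move=> Yl; rewrite mulr_ge0 // subr_ge0.
      have : (2 : int) <= Y l by clear -Yl; lia.
      by rewrite -(ler_int R).
    have excess0 : \sum_(l | 1 < Y l) mu l * ((Y l)%:~R - 2) = 0.
      rewrite (eq_bigr (fun l => mu l * (Y l)%:~R - 2 * mu l)) ?sumrB -?mulr_sumr -/S2 -/H ?S2_eq ?subrr //.
      by move=> l _; ring.
    move/eqP: (psumr_eq0P excess_ge0 excess0 Yi); rewrite mulf_eq0 gt_eqF //= subr_eq0.
    by rewrite -[2]/(2%:~R) eqr_int => /eqP.
  have [half_ge0 half_lt] : 0 <= 1/2 :> R /\ 1/2 < H by split; lra.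
  have [p [q [qp Yp Yq mup muq]]] := exists_two_pos half_ge0 mu_le half_lt.
  have [v [v_sum v_Y v_X v_supp]] := exists_direction_pair qp (etrans (Y2 p Yp mup) (esym (Y2 q Yq muq))).
  apply: (free_repr_of_offaxis_weights eta_bnd eta_axis eta_mass be_rng eta_Y v_sum v_Y v_X).
  by move=> i /v_supp[] ->; rewrite eta_val ?Yp ?Yq; apply: scaled_mass_free.
have ka01s : 0 < ka < 1.
  by case/andP: ka01 => _ ->; rewrite ka_gt0 // lt_neqAle eq_sym S2_neq H2_le.
have [|p [q [r [[Yp mup] [Yq muq] [Yr mur] pqr]]]] := @exists_noncollinear_triple (fun i => 0 < Y i).
  have -> : \sum_(i | 0 < Y i) mu i = m1 + H.
    by rewrite (bigID (fun i => Y i == 1)) /=; congr (_ + _); apply: eq_bigl => i; clear; lia.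
  lra.
have [v [v_sum v_Y v_X v_supp]] := exists_direction_triple pqr.
apply: (free_repr_of_offaxis_weights eta_bnd eta_axis eta_mass be_rng eta_Y v_sum v_Y v_X).
have up_free i : 0 < Y i -> 0 < mu i -> 0 < eta i < mu i.
  move=> Yi mui; rewrite eta_val; case: ifP => Y1; first exact: scaled_mass_free.
  have -> : Y i == 1 by clear -Yi Y1; lia.
  exact: scaled_mass_free.
by move=> i /v_supp[] ->; apply: up_free.
Qed.

Lemma free_repr_axis :
  (0 < \sum_(i | Y i < 0) mu i -> 0 < \sum_(i | 0 < Y i) mu i) ->
  exists t z, free_repr (fun i => (X i, Y i)) mu t z.
Proof.
move=> below_above; have [below0|below_neq0] := eqVneq (\sum_(i | Y i < 0) mu i) 0.
  by apply: free_repr_one_sided => i; apply: (psumr_eq0P (fun i _ => mu_ge0 i) below0).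
have below_gt0 : 0 < \sum_(i | Y i < 0) mu i by rewrite lt_neqAle eq_sym below_neq0 sumr_ge0.
exact: free_repr_two_sided below_gt0 (below_above below_gt0).
Qed.

End AxisConfiguration.

Lemma interior_lattice_point_in_frame (R : realType) (n : nat) (a : 'I_n -> int * int)
    (mu : 'I_n -> R) (u v o : int * int) :
  u.1 * v.1 + u.2 * v.2 = 1 -> injective a -> (forall i, 0 <= mu i) -> (forall i, mu i <= 1/2) ->
  \sum_(i < n) mu i = 399%:R / 100%:R ->
  (forall c1 c2 c0 : R, (c1, c2) != (0, 0) -> points_in a mu (on_line c1 c2 c0) <= 3/2) ->
  \sum_(i | (frame u v o (a i)).2 == 0) mu i = 3/2 ->
  (0 < \sum_(i | (frame u v o (a i)).2 < 0) mu i -> 0 < \sum_(i | 0 < (frame u v o (a i)).2) mu i) ->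
  exists z, interior (Sigma1R a mu) (toR2 R z).
Proof.
move=> uv1 a_inj mu_ge0 mu_le mu_total line_le axis_mass below_above.
pose X i := (frame u v o (a i)).1; pose Y i := (frame u v o (a i)).2.
have XY_inj i j : X i = X j -> Y i = Y j -> i = j.
  move=> Xij Yij; apply: a_inj; rewrite -(frameK o uv1 (a i)) -(frameK o uv1 (a j)).
  by rewrite [frame _ _ _ (a i)]surjective_pairing [frame _ _ _ (a j)]surjective_pairing -/(X i) -/(Y i) Xij Yij.
have line_le' c1 c2 c0 : (c1, c2) != (0, 0) ->
    points_in (fun i => (X i, Y i)) mu (on_line c1 c2 c0) <= 3/2.
  move=> c_neq0; have [d1 [d2 [d0 [d_neq0 dE]]]] := on_line_frame o uv1 c0 c_neq0.
  by rewrite /points_in (eq_bigl _ _ (fun i => dE (a i))); apply: line_le.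
have [t [z tz]] := free_repr_axis XY_inj mu_ge0 mu_le axis_mass mu_total line_le' below_above.
by exists (unframe u v o z); apply: free_repr_interior (free_repr_frame uv1 tz).
Qed.

Theorem lemma3p4 (R : realType) (n : nat) (a : 'I_n -> int * int)
  (mu : 'I_n -> R) :
  real_seq a mu ->
  total_mult mu = 399%:R / 100%:R ->
  (forall i, mu i <= 2^-1) ->
  (forall c1 c2 c0 : R, (c1, c2) != (0, 0) ->
     points_in a mu (on_line c1 c2 c0) <= 3%:R / 2%:R) ->
  (exists c1 c2 c0 : R, (c1, c2) != (0, 0) /\
     points_in a mu (on_line c1 c2 c0) = 3%:R / 2%:R) ->
  exists z : int * int, interior (Sigma1R a mu) (toR2 R z).
Proof.
move=> [a_inj mu_ge0] mu_total mu_le line_le [c1 [c2 [c0 [c_neq0 ell_mass]]]].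
have mu_le' i : mu i <= 1/2 by rewrite div1r.
have [half_ge0 half_lt] : 0 <= 1/2 :> R /\ 1/2 < points_in a mu (on_line c1 c2 c0).
  by rewrite ell_mass; split; lra.
have [i [j [ji on_i on_j _ _]]] := exists_two_pos half_ge0 mu_le' half_lt.
pose d := ((a j).1 - (a i).1, (a j).2 - (a i).2).
have d_neq0 : d != (0, 0).
  apply: contra ji => /eqP[d1 d2]; apply/eqP/a_inj.
  by rewrite [a j]surjective_pairing [a i]surjective_pairing; congr pair; apply/eqP;
    rewrite -subr_eq0 ?d1 ?d2.
have [u [v [g [uv1 d1E d2E]]]] := primitive_direction d_neq0.
have g_neq0 : g != 0 by apply: contra d_neq0 => /eqP g0; rewrite [d]surjective_pairing d1E d2E g0 !mul0r.
pose o := a i.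
have on_ov : on_line c1 c2 c0 (toR2 R (o.1 + g * v.1, o.2 + g * v.2)).
  by rewrite -d1E -d2E /d /o !subrKC -surjective_pairing.
have axis := on_line_axis uv1 c_neq0 g_neq0 on_i on_ov.
have axis_mass : \sum_(l | (frame u v o (a l)).2 == 0) mu l = 3/2.
  by rewrite -ell_mass; apply: eq_bigl => l; rewrite axis.
have [above0|above_neq0] := eqVneq (\sum_(l | 0 < (frame u v o (a l)).2) mu l) 0.
  apply: (@interior_lattice_point_in_frame _ _ _ _ (- u) (- v) o) => //.
  - by rewrite /= !mulrNN.
  - by rewrite -axis_mass; apply: eq_bigl => l; rewrite frame_opp oppr_eq0.
  - by rewrite (eq_bigl (fun l => 0 < (frame u v o (a l)).2)) ?above0 ?ltxx // => l; rewrite frame_opp oppr_lt0.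
apply: (@interior_lattice_point_in_frame _ _ _ _ u v o uv1) => // _.
by rewrite lt_neqAle eq_sym above_neq0 sumr_ge0.
Qed.
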